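(* If $Q\in\mathcal{P}$ has full range, i.e. $\{Q(A):A\in\mathcal{F}\}=[0,1]$, then $D^*(v,Q)=L(v)$ for all $0<v<2$.
   Context: Let $(\Omega,\mathcal{F},\mu)$ be a finite or $\sigma$-finite measure space, and let $\mathcal{P}$ be the set of probability measures on $(\Omega,\mathcal{F})$ absolutely continuous with respect to $\mu$. For $P,Q\in\mathcal{P}$ the lower-case letters $p,q$ denote their densities with respect to $\mu$. The Kullback–Leibler divergence is $D(P\Vert Q)=\int\ln\frac{dP}{dQ}\,dP$ if $P\ll Q$, and $+\infty$ otherwise. The total variation distance is $V(P,Q)=\int_\Omega|p-q|\,d\mu$. For $v>0$ define $D^*(v,Q)=\inf\{D(P\Vert Q):P\in\mathcal{P},\ V(P,Q)\ge v\}$, with $\inf\emptyset=+\infty$. Vajda's function is $L(v)=\inf\{D(P\Vert Q):V(P,Q)=v\}$, where the infimum is over all pairs of probability measures $P,Q$ on a common measurable space. *)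

From HB Require Import structures.
From mathcomp Require Import all_boot all_order all_algebra.
From mathcomp Require Import all_classical all_reals all_analysis.
Set Implicit Arguments. Unset Strict Implicit. Unset Printing Implicit Defensive.
Import Order.TTheory GRing.Theory Num.Theory.
Local Open Scope classical_set_scope.
Local Open Scope ring_scope.
Local Open Scope ereal_scope.

Section defs.
Context {R : realType} {d : measure_display} {T : measurableType d}.

(* p is the density (w.r.t. mu) of a probability measure absolutely
   continuous w.r.t. mu: P(A) = \int_A p dmu. *)
Definition is_density (mu : {measure set T -> \bar R}) (p : T -> R) : Prop :=
  measurable_fun setT p /\ (forall x, (0 <= p x)%R) /\
  \int[mu]_x (p x)%:E = 1.

Definition dprob (mu : {measure set T -> \bar R}) (p : T -> R) (A : set T) :=
  \int[mu]_(x in A) (p x)%:E.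

Definition abs_cont (mu : {measure set T -> \bar R}) (p q : T -> R) : Prop :=
  forall A, measurable A -> dprob mu q A = 0 -> dprob mu p A = 0.

Definition KL (mu : {measure set T -> \bar R}) (p q : T -> R) : \bar R :=
  if `[< abs_cont mu p q >] then \int[mu]_x (p x * ln (p x / q x))%:E
  else +oo.

Definition TV (mu : {measure set T -> \bar R}) (p q : T -> R) : \bar R :=
  \int[mu]_x (`|p x - q x|)%:E.

Definition Dstar (mu : {measure set T -> \bar R}) (q : T -> R) (v : R) : \bar R :=
  ereal_inf [set KL mu p q | p in [set p | is_density mu p /\ v%:E <= TV mu p q]].

Definition full_range (mu : {measure set T -> \bar R}) (q : T -> R) : Prop :=
  [set dprob mu q A | A in measurable] = [set r%:E | r in [set r : R | (0 <= r <= 1)%R]].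

End defs.

(* Vajda's function: L(v) = inf { D(P||Q) : V(P,Q) = v }, over all pairs of
   probability measures P, Q on a common measurable space; each such pair is
   represented by densities w.r.t. a common (sigma-finite) dominating measure. *)
Definition vajdaL {R : realType} (v : R) : \bar R :=
  ereal_inf [set x : \bar R | exists (d : measure_display) (T : measurableType d)
     (mu : {measure set T -> \bar R}) (p q : T -> R),
     [/\ sigma_finite setT mu, is_density mu p, is_density mu q,
         TV mu p q = v%:E & KL mu p q = x]].

(* Let A be the set where p > q > 0, a = P(A) and b = Q(A), so that
   V(P,Q) = 2(a - b).  Integrating the tangent bound
   x ln(x/y) >= x (ln t + 1) - t y separately over A and over its complement
   and optimising in t gives D(P||Q) >= d(a'||b) for every b <= a' <= a, where
   d is the binary divergence.  Conversely, as Q has full range there is a set B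
   with Q(B) = b, and rescaling q by a/b on B and by (1-a)/(1-b) off B yields a
   density realising V = 2(a - b) and D = d(a||b) on the given space.  Each
   competitor in either infimum is thus dominated by such a two-valued tilt. *)

From HB Require Import structures.
From mathcomp Require Import all_boot all_order all_algebra.
From mathcomp Require Import all_classical all_reals all_analysis.
From mathcomp Require Import measurable_realfun.
From mathcomp.algebra_tactics Require Import ring lra.
Import Order.TTheory GRing.Theory Num.Theory.
Local Open Scope classical_set_scope.
Local Open Scope ring_scope.
Local Open Scope ereal_scope.

Section binary_divergence.
Context {R : realType}.
Local Open Scope ring_scope.

Definition binary_KL (a b : R) : R :=
  a * ln (a / b) + (1 - a) * ln ((1 - a) / (1 - b)).

Definition binary_tangent (a b t1 t2 : R) : R :=
  a * (ln t1 + 1) - t1 * b + ((1 - a) * (ln t2 + 1) - t2 * (1 - b)).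

Lemma subr1V_le_ln (z : R) : 0 < z -> 1 - z^-1 <= ln z.
Proof.
move=> z0; have := @le_ln1Dx R (z^-1 - 1).
rewrite ltrBrDr addrC subrr invr_gt0 => /(_ z0).
by rewrite addrC subrK lnV ?posrE //; lra.
Qed.

(* The left-hand side is the tangent at [y = x / t] of the convex function
   [y |-> x ln (x / y)]. *)
Lemma tangent_le_mul_ln (x y t : R) : 0 <= x -> 0 < y -> 0 < t ->
  x * (ln t + 1) - t * y <= x * ln (x / y).
Proof.
move=> x0 y0 t0; have [->|xn0] := eqVneq x 0.
  by rewrite !mul0r sub0r oppr_le0 mulr_ge0 // ltW.
have xp : 0 < x by rewrite lt_neqAle eq_sym xn0.
pose z := x / (t * y).
have zp : 0 < z by rewrite divr_gt0 // mulr_gt0.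
have -> : x / y = t * z by rewrite /z; field; rewrite ?gt_eqF.
have zVx : z^-1 * x = t * y by rewrite /z invf_div; field; rewrite gt_eqF.
rewrite lnM ?posrE //.
have := ler_wpM2l (ltW xp) (subr1V_le_ln _ zp).
by rewrite mulrBr mulr1 (mulrC x) zVx; lra.
Qed.

Lemma binary_KL_le_tangent_bound (a a' b : R) (X : \bar R) :
  0 < b -> b < 1 -> b <= a' -> a' <= a -> a <= 1 ->
  (forall t1 t2, 0 < t1 -> 0 < t2 -> ((binary_tangent a b t1 t2)%:E <= X)%E) ->
  ((binary_KL a' b)%:E <= X)%E.
Proof.
move=> b0 b1 ba' a'a a1 tangentX.
have b1' : 0 < 1 - b by rewrite subr_gt0.
have a'0 : 0 < a' by exact: lt_le_trans ba'.
have [a'1|a'1] := eqVneq a' 1.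
  have a1' : a = 1 by apply/eqP; rewrite eq_le a1 -a'1 a'a.
  subst a' a.
  (* for [a = 1] the optimal [t2] would be [0]: take [t2 = e / (1 - b)] *)
  apply/lee_addgt0Pr => e e0.
  have := tangentX _ _ (divr_gt0 ltr01 b0) (divr_gt0 e0 b1').
  rewrite -leeBlDr // -EFinB; apply: le_trans; rewrite lee_fin /binary_tangent.
  rewrite /binary_KL subrr !mul0r addr0 mul1r (divfK (lt0r_neq0 b1')) div1r.
  by rewrite mulVf ?gt_eqF //; lra.
have a'1' : a' < 1 by rewrite lt_neqAle a'1 (le_trans a'a a1).
pose t1 := a' / b; pose t2 := (1 - a') / (1 - b).
have t1b : t1 * b = a' by rewrite /t1 divfK // gt_eqF.
have t2b : t2 * (1 - b) = 1 - a' by rewrite /t2 divfK // gt_eqF.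
have lnt1 : 0 <= ln t1 by apply: ln_ge0; rewrite /t1 ler_pdivlMr // mul1r.
have lnt2 : ln t2 <= 0.
  by apply: ln_le0; rewrite /t2 ler_pdivrMr // mul1r lerD2l lerN2.
apply: le_trans (tangentX t1 t2 _ _); last 2 first.
- by rewrite divr_gt0.
- by rewrite divr_gt0 // subr_gt0.
rewrite lee_fin /binary_tangent /binary_KL -/t1 -/t2 t1b t2b.
have : 0 <= (a - a') * ln t1 by rewrite mulr_ge0 // subr_ge0.
have : 0 <= (a' - a) * ln t2 by rewrite mulr_le0 // subr_le0.
nra.
Qed.

End binary_divergence.

Definition prob {R : realType} {d : measure_display} {T : measurableType d}
  (mu : {measure set T -> \bar R}) (p : T -> R) (A : set T) : R :=
  fine (dprob mu p A).

Section density.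
Context {R : realType} {d : measure_display} {T : measurableType d}
  {mu : {measure set T -> \bar R}}.

Lemma le_integral_measurable (D : set T) (f g : T -> \bar R) : measurable D ->
  measurable_fun D f -> measurable_fun D g -> (forall x, D x -> f x <= g x) ->
  \int[mu]_(x in D) f x <= \int[mu]_(x in D) g x.
Proof.
move=> mD mf mg fg; rewrite integralE [leRHS]integralE leeB //.
- apply: ge0_le_integral => //; try exact: measurable_funepos.
  by move=> x Dx; apply: (@funepos_le _ _ D) => // [y /set_mem/fg|]; [|exact/mem_set].
- apply: ge0_le_integral => //; try exact: measurable_funeneg.
  by move=> x Dx; apply: (@funeneg_le _ _ D) => // [y /set_mem/fg|]; [|exact/mem_set].
Qed.

Lemma measurable_setb (b : T -> bool) : measurable_fun setT b -> measurable [set x | b x].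
Proof. by move=> /(_ measurableT [set true] I); rewrite setTI. Qed.

Lemma measurable_funV_ge0 (g : T -> R) : measurable_fun setT g ->
  (forall x, (0 <= g x)%R) -> measurable_fun setT (fun x => (g x)^-1%R).
Proof.
move=> mg g0.
have -> : (fun x => (g x)^-1%R) =
    (fun x => if g x == 0%R then 0%R else expR (- ln (g x))).
  apply/funext => x; case: eqP => [->|/eqP gx0]; first by rewrite invr0.
  have gp : (0 < g x)%R by rewrite lt_neqAle eq_sym gx0 g0.
  by rewrite -lnV ?posrE // lnK // posrE invr_gt0.
apply: measurable_fun_ifT; first exact: measurable_fun_eqr.
  exact: measurable_cst.
apply: measurableT_comp; first exact: measurable_expR.
by apply: measurableT_comp => //; apply: measurableT_comp => //; exact: measurable_ln.
Qed.

Lemma measurable_KL_integrand (p q : T -> R) : measurable_fun setT p ->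
  measurable_fun setT q -> (forall x, (0 <= q x)%R) ->
  measurable_fun setT (fun x => p x * ln (p x / q x))%R.
Proof.
move=> mp mq q0; apply: measurable_funM => //.
apply: measurableT_comp; first exact: measurable_ln.
by apply: measurable_funM => //; exact: measurable_funV_ge0.
Qed.

Section one_density.
Context {p : T -> R} (hp : is_density mu p).

Let mp : measurable_fun setT p := proj1 hp.
Let p_ge0 x : (0 <= p x)%R := proj1 (proj2 hp) x.
Let p_int1 : \int[mu]_x (p x)%:E = 1 := proj2 (proj2 hp).

Lemma density_integrable (A : set T) : measurable A -> mu.-integrable A (EFin \o p).
Proof.
move=> mA; apply: (integrableS measurableT) => //.
apply/integrableP; split; first exact/measurable_EFinP.
by under eq_integral do rewrite /= ger0_norm //; rewrite p_int1 ltry.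
Qed.

Lemma dprobE (A : set T) : measurable A -> dprob mu p A = (prob mu p A)%:E.
Proof.
move=> mA; rewrite fineK // ge0_fin_numE; last first.
  by apply: integral_ge0 => x _; rewrite lee_fin.
apply: le_lt_trans (ltry 1); rewrite -p_int1.
apply: ge0_subset_integral => //; first exact/measurable_EFinP.
by move=> x _; rewrite lee_fin.
Qed.

Lemma prob_ge0 (A : set T) : (0 <= prob mu p A)%R.
Proof. by apply/fine_ge0/integral_ge0 => x _; rewrite lee_fin. Qed.

Lemma probT : prob mu p setT = 1%R.
Proof. by rewrite /prob /dprob p_int1. Qed.

Lemma probU (A B : set T) : measurable A -> measurable B -> [disjoint A & B] ->
  prob mu p (A `|` B) = (prob mu p A + prob mu p B)%R.
Proof.
move=> mA mB AB; apply: EFin_inj; rewrite EFinD -!dprobE //; last exact: measurableU.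
rewrite /dprob ge0_integral_setU //; last by move=> x _; rewrite lee_fin.
by apply: (measurable_funS measurableT) => //; exact/measurable_EFinP.
Qed.

Lemma probC (A : set T) : measurable A -> prob mu p (~` A) = (1 - prob mu p A)%R.
Proof.
move=> mA; rewrite -probT -(setUv A) probU //; first by rewrite addrC addKr.
  exact: measurableC.
by apply/disj_set2P; rewrite setICr.
Qed.

End one_density.

Lemma integral_lin_densities (p q : T -> R) (A : set T) (c t : R) :
  is_density mu p -> is_density mu q -> measurable A ->
  \int[mu]_(x in A) (c * p x - t * q x)%:E = (c * prob mu p A - t * prob mu q A)%:E.
Proof.
move=> hp hq mA.
have ip := density_integrable hp _ mA; have iq := density_integrable hq _ mA.
under eq_integral do rewrite EFinB.
rewrite integralB_EFin //; last 2 first.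
- by apply: eq_integrable (integrableZl mA c ip) => // x _ /=; rewrite EFinM.
- by apply: eq_integrable (integrableZl mA t iq) => // x _ /=; rewrite EFinM.
under eq_integral do rewrite EFinM.
under [X in _ - X]eq_integral do rewrite EFinM.
by rewrite !integralZl // -!/(dprob mu _ A) !dprobE.
Qed.

Lemma abs_cont_le_mul (p q : T -> R) (c : R) :
  is_density mu p -> is_density mu q -> (forall x, p x <= c * q x)%R ->
  abs_cont mu p q.
Proof.
move=> hp hq pcq A mA qA0; have [mp [p0 _]] := hp; have [mq _] := hq.
apply/eqP; rewrite eq_le; apply/andP; split; last first.
  by apply: integral_ge0 => x _; rewrite lee_fin.
apply: (@le_trans _ _ (\int[mu]_(x in A) (c * q x - 0 * p x)%:E)); last first.
  by rewrite integral_lin_densities // /prob qA0 mulr0 mul0r subr0.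
apply: ge0_le_integral => //.
- by move=> x _; rewrite lee_fin.
- by apply: (measurable_funS measurableT) => //; exact/measurable_EFinP.
- apply: (measurable_funS measurableT) => //; apply/measurable_EFinP.
  by apply: measurable_funB; apply: measurable_funM => //; exact: measurable_cst.
- by move=> x _; rewrite mul0r subr0 lee_fin.
Qed.

Lemma tangent_le_integral {p q : T -> R} {S : set T} {t : R} :
  is_density mu p -> is_density mu q -> measurable S ->
  (forall x, S x -> q x != 0%R) -> (0 < t)%R ->
  ((ln t + 1) * prob mu p S - t * prob mu q S)%:E <=
    \int[mu]_(x in S) (p x * ln (p x / q x))%:E.
Proof.
move=> hp hq mS Sq t0; have [mp [p0 _]] := hp; have [mq [q0 _]] := hq.
rewrite -integral_lin_densities //; apply: le_integral_measurable => //.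
- apply: (measurable_funS measurableT) => //; apply/measurable_EFinP.
  by apply: measurable_funB; apply: measurable_funM => //; exact: measurable_cst.
- apply: (measurable_funS measurableT) => //; apply/measurable_EFinP.
  exact: measurable_KL_integrand.
- move=> x Sx; rewrite lee_fin (mulrC (ln t + 1)%R); apply: tangent_le_mul_ln => //.
  by rewrite lt_neqAle eq_sym Sq // q0.
Qed.

End density.

Section excess.
Context {R : realType} {d : measure_display} {T : measurableType d}
  {mu : {measure set T -> \bar R}} {p q : T -> R}.
Hypotheses (hp : is_density mu p) (hq : is_density mu q).

(* The tangent bound fails on [qzero_set], where [p x / q x = 0]; there both
   densities integrate to zero, by absolute continuity for [p]. *)
Definition excess_set := [set x | (q x != 0%R) && (q x < p x)%R].
Definition deficit_set := [set x | (q x != 0%R) && (p x <= q x)%R].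
Definition qzero_set := [set x | q x == 0%R].

Let mp : measurable_fun setT p := proj1 hp.
Let mq : measurable_fun setT q := proj1 hq.
Let q_ge0 x : (0 <= q x)%R := proj1 (proj2 hq) x.

Lemma measurable_excess_set : measurable excess_set.
Proof.
apply/measurable_setb/measurable_and; last exact: measurable_fun_ltr.
exact/measurable_neg/measurable_fun_eqr.
Qed.

Lemma measurable_deficit_set : measurable deficit_set.
Proof.
apply/measurable_setb/measurable_and; last exact: measurable_fun_ler.
exact/measurable_neg/measurable_fun_eqr.
Qed.

Lemma measurable_qzero_set : measurable qzero_set.
Proof. exact/measurable_setb/measurable_fun_eqr. Qed.

Lemma integral_excess_deficit_qzero (f : T -> \bar R) : measurable_fun setT f ->
  \int[mu]_x f x = \int[mu]_(x in excess_set) f x +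
    \int[mu]_(x in deficit_set) f x + \int[mu]_(x in qzero_set) f x.
Proof.
move=> mf.
have -> : [set: T] = (excess_set `|` deficit_set) `|` qzero_set.
  apply/seteqP; split => // x _; rewrite /excess_set /deficit_set /qzero_set /=.
  have [/eqP qx0|qx0] := boolP (q x == 0%R); first by right.
  by left; have [h|h] := ltP (q x) (p x); [left|right].
have mE := measurable_excess_set; have mD := measurable_deficit_set.
have mED : measurable (excess_set `|` deficit_set) by exact: measurableU.
have dED : [disjoint excess_set & deficit_set].
  apply/disj_set2P/seteqP; split => // x [/andP[_ qp] /andP[_ pq]].
  by move: qp; rewrite ltNge pq.
have dEDZ : [disjoint excess_set `|` deficit_set & qzero_set].
  apply/disj_set2P/seteqP; split => // x [[/andP[qx0 _]|/andP[qx0 _]] /eqP qx0'];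
    by rewrite qx0' eqxx in qx0.
rewrite integral_setU //; last 2 first.
- exact: measurable_qzero_set.
- exact: measurable_funS mf.
by rewrite integral_setU //; exact: measurable_funS mf.
Qed.

Lemma dprob_qzero_set : dprob mu q qzero_set = 0.
Proof. by apply: integral0_eq => x /= /eqP ->. Qed.

Lemma prob_deficit_set (r : T -> R) : is_density mu r ->
  dprob mu r qzero_set = 0 ->
  prob mu r deficit_set = (1 - prob mu r excess_set)%R.
Proof.
move=> hr r0; have [mr [_ r1]] := hr.
have := integral_excess_deficit_qzero (EFin \o r) (proj2 (measurable_EFinP _ _) mr).
rewrite r1 -!/(dprob mu r _) r0 adde0 !dprobE //.
  by rewrite -EFinD => -[->]; rewrite addrC addKr.
exact: measurable_deficit_set.
exact: measurable_excess_set.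
Qed.

Section abs_cont.
Hypothesis pq : abs_cont mu p q.

Let dprob_p_qzero_set : dprob mu p qzero_set = 0.
Proof. exact: pq _ measurable_qzero_set dprob_qzero_set. Qed.

Local Notation a := (prob mu p excess_set).
Local Notation b := (prob mu q excess_set).

Lemma TV_excess_set : TV mu p q = (2 * (a - b))%:E.
Proof.
rewrite /TV integral_excess_deficit_qzero; last first.
  apply/measurable_EFinP; apply: measurableT_comp => //; exact: measurable_funB.
have -> : \int[mu]_(x in excess_set) `|p x - q x|%:E = (1 * a - 1 * b)%:E.
  rewrite -integral_lin_densities //; last exact: measurable_excess_set.
  apply: eq_integral => x /set_mem /andP[_ qp].
  by rewrite !mul1r ger0_norm // subr_ge0 ltW.
have -> : \int[mu]_(x in deficit_set) `|p x - q x|%:E =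
    (-1 * prob mu p deficit_set - -1 * prob mu q deficit_set)%:E.
  rewrite -integral_lin_densities //; last exact: measurable_deficit_set.
  apply: eq_integral => x /set_mem /andP[_ pleq].
  by rewrite !mulN1r opprK ler0_norm ?subr_le0 // opprB addrC.
have -> : \int[mu]_(x in qzero_set) `|p x - q x|%:E = 0.
  rewrite -[RHS]dprob_p_qzero_set; apply: eq_integral => x /set_mem /eqP ->.
  by rewrite subr0 ger0_norm // (proj1 (proj2 hp)).
rewrite !prob_deficit_set // ?dprob_qzero_set // adde0 -EFinD; congr EFin; lra.
Qed.

Lemma prob_excess_set_eq0 : b = 0%R -> a = 0%R.
Proof.
have mE := measurable_excess_set.
move=> b0; have := pq _ mE; rewrite !dprobE // b0 => /(_ erefl).
by move=> -[].
Qed.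

Lemma binary_tangent_le_integral (t1 t2 : R) : (0 < t1)%R -> (0 < t2)%R ->
  (binary_tangent a b t1 t2)%:E <= \int[mu]_x (p x * ln (p x / q x))%:E.
Proof.
move=> t1_gt0 t2_gt0.
rewrite integral_excess_deficit_qzero; last first.
  exact/measurable_EFinP/measurable_KL_integrand.
have -> : \int[mu]_(x in qzero_set) (p x * ln (p x / q x))%:E = 0.
  by apply: integral0_eq => x /= /eqP ->; rewrite invr0 mulr0 ln0 // mulr0.
rewrite adde0.
have qE x : excess_set x -> q x != 0%R by case/andP.
have qD x : deficit_set x -> q x != 0%R by case/andP.
have := tangent_le_integral hp hq measurable_excess_set qE t1_gt0.
have := tangent_le_integral hp hq measurable_deficit_set qD t2_gt0.
rewrite !prob_deficit_set // ?dprob_qzero_set // => ineq2 ineq1.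
apply: le_trans (leeD ineq1 ineq2); rewrite -EFinD lee_fin /binary_tangent; lra.
Qed.

Lemma binary_KL_le_KL (v : R) : (0 < v)%R -> v%:E <= TV mu p q ->
  exists b : R, [/\ (0 < b)%R, (b + v / 2 <= 1)%R &
    (binary_KL (b + v / 2) b)%:E <= KL mu p q].
Proof.
move=> v_gt0; rewrite TV_excess_set lee_fin => vab.
have b_ge0 : (0 <= b)%R := prob_ge0 hq excess_set.
have a_le1 : (a <= 1)%R.
  by have := prob_ge0 hp deficit_set; rewrite prob_deficit_set // subr_ge0.
have b_gt0 : (0 < b)%R.
  rewrite lt_neqAle eq_sym b_ge0 andbT; apply/eqP => /[dup] b0.
  by move/prob_excess_set_eq0 => a0; move: vab; rewrite a0 b0; lra.
exists b; split => //; first lra.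
rewrite /KL asboolT //; apply: (@binary_KL_le_tangent_bound _ a) => //; try lra.
exact: binary_tangent_le_integral.
Qed.

End abs_cont.
End excess.

Section tilt.
Context {R : realType} {d : measure_display} {T : measurableType d}
  {mu : {measure set T -> \bar R}} (q : T -> R) (B : set T) (a b : R).
Hypotheses (hq : is_density mu q) (mB : measurable B) (qB : prob mu q B = b).
Hypotheses (b_gt0 : (0 < b)%R) (b_lt1 : (b < 1)%R).
Hypotheses (ba : (b <= a)%R) (a_le1 : (a <= 1)%R).

Definition tilt (x : T) : R :=
  q x * (a / b * \1_B x + (1 - a) / (1 - b) * \1_(~` B) x).

Let mq : measurable_fun setT q := proj1 hq.
Let q_ge0 x : (0 <= q x)%R := proj1 (proj2 hq) x.
Let mBC : measurable (~` B) := measurableC mB.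
Let b1_gt0 : (0 < 1 - b)%R. Proof. by rewrite subr_gt0. Qed.

Lemma tilt_in x : B x -> tilt x = (a / b * q x)%R.
Proof.
by move=> Bx; rewrite /tilt !indicE mem_set // memNset // mulr0 addr0 mulr1 mulrC.
Qed.

Lemma tilt_out x : ~ B x -> tilt x = ((1 - a) / (1 - b) * q x)%R.
Proof.
move=> Bx; rewrite /tilt !indicE memNset // mem_set //.
by rewrite mulr0 add0r mulr1 mulrC.
Qed.

Lemma measurable_tilt : measurable_fun setT tilt.
Proof.
apply: measurable_funM => //; apply: measurable_funD;
  by apply: measurable_funM; [exact: measurable_cst | exact: measurable_indic].
Qed.

Lemma integral_piecewise_multiple (g : T -> R) (k1 k2 : R) :
  measurable_fun setT g ->
  (forall x, B x -> g x = k1 * q x)%R -> (forall x, ~ B x -> g x = k2 * q x)%R ->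
  \int[mu]_x (g x)%:E = (k1 * b + k2 * (1 - b))%:E.
Proof.
move=> mg gB gBC.
have dB : [disjoint B & ~` B] by apply/disj_set2P; rewrite setICr.
rewrite -(setUv B) integral_setU //; last first.
  by apply: (measurable_funS measurableT) => //; exact/measurable_EFinP.
have -> : \int[mu]_(x in B) (g x)%:E = (k1 * prob mu q B - 0 * prob mu q B)%:E.
  rewrite -integral_lin_densities //; apply: eq_integral => x /set_mem /gB ->.
  by rewrite mul0r subr0.
have -> : \int[mu]_(x in ~` B) (g x)%:E =
    (k2 * prob mu q (~` B) - 0 * prob mu q (~` B))%:E.
  rewrite -integral_lin_densities //; apply: eq_integral => x /set_mem /gBC ->.
  by rewrite mul0r subr0.
by rewrite probC // qB -EFinD !mul0r !subr0.
Qed.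

Lemma is_density_tilt : is_density mu tilt.
Proof.
split; first exact: measurable_tilt.
split.
  move=> x; have [Bx|Bx] := pselect (B x); [rewrite tilt_in | rewrite tilt_out] => //.
    by rewrite mulr_ge0 // divr_ge0 // ltW // (lt_le_trans b_gt0).
  by rewrite mulr_ge0 // divr_ge0 ?subr_ge0 // ltW.
rewrite (integral_piecewise_multiple _ _ _ measurable_tilt tilt_in tilt_out).
by rewrite !divfK ?gt_eqF // addrC subrK.
Qed.

Lemma TV_tilt : TV mu tilt q = (2 * (a - b))%:E.
Proof.
have k1_ge0 : (0 <= a / b - 1)%R by rewrite subr_ge0 ler_pdivlMr // mul1r.
have k2_ge0 : (0 <= 1 - (1 - a) / (1 - b))%R.
  by rewrite subr_ge0 ler_pdivrMr // mul1r lerD2l lerN2.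
rewrite /TV (integral_piecewise_multiple _ (a / b - 1) (1 - (1 - a) / (1 - b))).
- by congr EFin; field; rewrite !gt_eqF.
- by apply: measurableT_comp => //; apply: measurable_funB => //; exact: measurable_tilt.
- move=> x Bx; rewrite tilt_in // -{2}(mul1r (q x)) -mulrBl.
  by rewrite ger0_norm // mulr_ge0.
- move=> x Bx; rewrite tilt_out // -{2}(mul1r (q x)) -mulrBl ler0_norm.
    by rewrite -mulNr opprB.
  by rewrite mulr_le0_ge0 // subr_le0 -subr_ge0.
Qed.

Lemma abs_cont_tilt : abs_cont mu tilt q.
Proof.
apply: (abs_cont_le_mul _ _ (a / b + (1 - a) / (1 - b)) is_density_tilt hq).
have k2_ge0 : (0 <= (1 - a) / (1 - b))%R by rewrite divr_ge0 ?subr_ge0 // ltW.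
have k1_ge0 : (0 <= a / b)%R by rewrite divr_ge0 // ltW // (lt_le_trans b_gt0).
move=> x; have [Bx|Bx] := pselect (B x); [rewrite tilt_in | rewrite tilt_out] => //.
  by rewrite ler_wpM2r // lerDl.
by rewrite ler_wpM2r // lerDr.
Qed.

Lemma KL_tilt : KL mu tilt q = (binary_KL a b)%:E.
Proof.
have scale_ln k x : (k * q x * ln (k * q x / q x) = k * ln k * q x)%R.
  have [->|qx0] := eqVneq (q x) 0%R; first by rewrite !(mul0r, mulr0).
  by rewrite mulfK //; ring.
rewrite /KL asboolT; last exact: abs_cont_tilt.
rewrite (integral_piecewise_multiple _ (a / b * ln (a / b))
  ((1 - a) / (1 - b) * ln ((1 - a) / (1 - b)))).
- by rewrite /binary_KL -!mulrA !(mulrC (ln _)) !mulrA !divfK ?gt_eqF.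
- exact: measurable_KL_integrand measurable_tilt mq q_ge0.
- by move=> x Bx; rewrite tilt_in.
- by move=> x Bx; rewrite tilt_out.
Qed.

End tilt.

Lemma exists_tilt {R : realType} {d : measure_display} {T : measurableType d}
    {mu : {measure set T -> \bar R}} {q : T -> R} (v b : R) :
  is_density mu q -> full_range mu q ->
  (0 < v)%R -> (0 < b)%R -> (b + v / 2 <= 1)%R ->
  exists p, [/\ is_density mu p, TV mu p q = v%:E &
    KL mu p q = (binary_KL (b + v / 2) b)%:E].
Proof.
move=> hq fr v_gt0 b_gt0 bv.
have b_lt1 : (b < 1)%R by lra.
have ba : (b <= b + v / 2)%R by lra.
have : [set r%:E | r in [set r : R | (0 <= r <= 1)%R]] b%:E.
  by exists b => //=; apply/andP; split; exact: ltW.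
rewrite -fr => -[B mB qB].
have pB : prob mu q B = b by rewrite /prob qB.
exists (tilt q B (b + v / 2) b); split.
- exact: is_density_tilt.
- by rewrite TV_tilt //; congr EFin; lra.
- exact: KL_tilt.
Qed.

Theorem theorem2 (R : realType) (d : measure_display) (T : measurableType d)
  (mu : {measure set T -> \bar R}) (q : T -> R) :
  sigma_finite setT mu -> is_density mu q -> full_range mu q ->
  forall v : R, (0 < v < 2)%R -> Dstar mu q v = vajdaL v.
Proof.
move=> sf hq fr v /andP[v_gt0 v_lt2]; apply/eqP; rewrite eq_le; apply/andP; split.
- apply: le_ereal_inf_tmp => _ [d' [T' [mu' [p0 [q0 [_ hp0 hq0 TVp0 <-]]]]]].
  have [ac|nac] := pselect (abs_cont mu' p0 q0); last by rewrite /KL asboolF ?leey.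
  have TVv : v%:E <= TV mu' p0 q0 by rewrite TVp0.
  have [b [b_gt0 bv KLb]] := binary_KL_le_KL hp0 hq0 ac _ v_gt0 TVv.
  have [p [hp TVp KLp]] := exists_tilt v b hq fr v_gt0 b_gt0 bv.
  apply: le_trans KLb; rewrite -KLp; apply: ereal_inf_lbound.
  by exists p => //; split => //; rewrite TVp.
- apply: le_ereal_inf_tmp => _ [p [hp TVp] <-].
  have [ac|nac] := pselect (abs_cont mu p q); last by rewrite /KL asboolF ?leey.
  have [b [b_gt0 bv KLb]] := binary_KL_le_KL hp hq ac _ v_gt0 TVp.
  have [p' [hp' TVp' KLp']] := exists_tilt v b hq fr v_gt0 b_gt0 bv.
  apply: le_trans KLb; rewrite -KLp'; apply: ereal_inf_lbound.
  by exists d, T, mu, p', q.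
Qed.
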